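(* Let $\hat{\mathcal{C}}$ be a reference frame, $K$ an intrinsic matrix and $C$ a corner matrix with associated unit vectors $a_0,\dots,a_3$ (defined in the context), and let $\delta\ge 0$. Let $\tilde{\mathcal{C}}$ be the frame with the same orientation as $\hat{\mathcal{C}}$ (i.e. ${}^{\hat{\mathcal{C}}}R_{\tilde{\mathcal{C}}}=I$) and with ${}^{\hat{\mathcal{C}}}t_{\tilde{\mathcal{C}}}=[0\ 0\ \tilde z]^T$. If $$\tilde z\ \ge\ \frac{\delta}{\min_{i\in\{0,1,2,3\}} a_{i,z}},$$ then $\mathcal{V}_{\tilde{\mathcal{C}}}(K,C)\subseteq\mathcal{V}_{\mathcal{F}}(K,C)$ for every frame $\mathcal{F}\in\mathcal{P}(\delta,0)$.
   Context: A reference frame is an origin in $\mathbb{R}^3$ with an orthonormal basis. ${}^{\mathcal{F}}R_{\mathcal{G}}$ is the rotation matrix whose columns are the basis vectors of $\mathcal{G}$ expressed in $\mathcal{F}$; ${}^{\mathcal{F}}t_{\mathcal{G}}$ is the vector from the origin of $\mathcal{F}$ to that of $\mathcal{G}$ in $\mathcal{F}$-coordinates; ${}^{\mathcal{F}}y$ is the coordinate vector of a point $y$ in $\mathcal{F}$; $v_z$ is the third component of $v$. $K\in\mathbb{R}^{3\times3}$ is an invertible upper triangular intrinsic matrix, $C=[c_0\ c_1\ c_2\ c_3]\in\mathbb{R}^{2\times4}$ a matrix of image corner points. Define $d_i=K^{-1}[c_i^T\ 1]^T$, $l_i=\operatorname{sign}(d_{i,z})d_i/\|d_i\|_2$, $a_i=-\frac{l_i\times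 l_{(i+1)\bmod4}}{\|l_i\times l_{(i+1)\bmod4}\|_2}$. Field of view of a camera at frame $\mathcal{G}$: $\mathcal{V}_{\mathcal{G}}(K,C)=\{y\in\mathbb{R}^3:({}^{\mathcal{G}}y)^Ta_i\ge0\ \forall i\}$. For $\delta,\epsilon\ge0$, $\mathcal{P}(\delta,\epsilon)$ is the set of frames $\mathcal{F}$ with $\|{}^{\mathcal{F}}t_{\hat{\mathcal{C}}}\|_2\le\delta$ and such that the rotation vector $\theta u$ of ${}^{\mathcal{F}}R_{\hat{\mathcal{C}}}$ satisfies $\|\theta u\|_2\le\epsilon$; thus $\mathcal{P}(\delta,0)$ consists of frames with the same orientation as $\hat{\mathcal{C}}$ whose origin is within distance $\delta$ of that of $\hat{\mathcal{C}}$. *)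

From HB Require Import structures.
From mathcomp Require Import all_boot all_order all_algebra.
From mathcomp Require Import all_classical all_reals all_analysis.
Set Implicit Arguments. Unset Strict Implicit. Unset Printing Implicit Defensive.
Import Order.TTheory GRing.Theory Num.Theory.
Local Open Scope ring_scope.

Section Defs.
Variable R : realType.

Definition i0 : 'I_3 := @Ordinal 3 0 isT.
Definition i1 : 'I_3 := @Ordinal 3 1 isT.
Definition i2 : 'I_3 := @Ordinal 3 2 isT.
Definition xc (v : 'cV[R]_3) : R := v i0 0.
Definition yc (v : 'cV[R]_3) : R := v i1 0.
Definition zc (v : 'cV[R]_3) : R := v i2 0.

Definition vec3 (a b c : R) : 'cV[R]_3 :=
  \col_(k < 3) (if (k : nat) == 0%N then a else if (k : nat) == 1%N then b else c).

Definition dotv (u v : 'cV[R]_3) : R := \sum_(k < 3) u k 0 * v k 0.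
Definition normv (v : 'cV[R]_3) : R := Num.sqrt (dotv v v).
Definition crossv (u v : 'cV[R]_3) : 'cV[R]_3 :=
  vec3 (yc u * zc v - zc u * yc v) (zc u * xc v - xc u * zc v)
       (xc u * yc v - yc u * xc v).

(* A reference frame, given by the world-coordinates of its origin and the
   matrix whose columns are its (orthonormal) basis vectors in world coords.
   Points y of R^3 are identified with their world coordinates. *)
Record frame := Frame {
  rot : 'M[R]_3 ;
  org : 'cV[R]_3 ;
  rot_orth : rot^T *m rot = 1%:M }.

Definition coord (F : frame) (y : 'cV[R]_3) : 'cV[R]_3 := (rot F)^T *m (y - org F).
Definition relR (F G : frame) : 'M[R]_3 := (rot F)^T *m rot G.
Definition relt (F G : frame) : 'cV[R]_3 := (rot F)^T *m (org G - org F).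

Definition intrinsic (K : 'M[R]_3) : Prop :=
  K \in unitmx /\ forall i j : 'I_3, (j < i)%N -> K i j = 0.

Definition dvec (K : 'M[R]_3) (C : 'M[R]_(2, 4)) (i : 'I_4) : 'cV[R]_3 :=
  invmx K *m vec3 (C (inord 0) i) (C (inord 1) i) 1.
Definition lvec K C i : 'cV[R]_3 :=
  (Num.sg (zc (dvec K C i)) / normv (dvec K C i)) *: dvec K C i.
Definition avec K C (i : 'I_4) : 'cV[R]_3 :=
  let cr := crossv (lvec K C i) (lvec K C (inord ((i + 1) %% 4))) in
  - ((normv cr)^-1 *: cr).

Definition amin K C : R :=
  Num.min (Num.min (zc (avec K C (inord 0))) (zc (avec K C (inord 1))))
          (Num.min (zc (avec K C (inord 2))) (zc (avec K C (inord 3)))).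

Definition fov (G : frame) K C (y : 'cV[R]_3) : Prop :=
  forall i : 'I_4, 0 <= dotv (coord G y) (avec K C i).

Definition skew (u : 'cV[R]_3) : 'M[R]_3 :=
  \matrix_(i < 3, j < 3)
   (if ((i : nat), (j : nat)) == (0%N, 1%N) then - zc u
    else if ((i : nat), (j : nat)) == (0%N, 2%N) then yc u
    else if ((i : nat), (j : nat)) == (1%N, 0%N) then zc u
    else if ((i : nat), (j : nat)) == (1%N, 2%N) then - xc u
    else if ((i : nat), (j : nat)) == (2%N, 0%N) then - yc u
    else if ((i : nat), (j : nat)) == (2%N, 1%N) then xc u
    else 0).

Definition rodrigues (w : 'cV[R]_3) : 'M[R]_3 :=
  let th := normv w in
  if th == 0 then 1%:M
  else 1%:M + sin th *: skew (th^-1 *: w) + (1 - cos th) *: (skew (th^-1 *: w) *m skew (th^-1 *: w)).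

Definition inP (delta eps : R) (Chat F : frame) : Prop :=
  normv (relt F Chat) <= delta /\
  exists w : 'cV[R]_3, normv w <= eps /\ relR F Chat = rodrigues w.

End Defs.

From Pilot Require Import Defs.
From HB Require Import structures.
From mathcomp Require Import all_boot all_order all_algebra.
From mathcomp Require Import all_classical all_reals all_analysis.
From mathcomp Require Import ring.
Import Order.TTheory GRing.Theory Num.Theory.
Local Open Scope ring_scope.

(* Since every frame of P(delta, 0) and the frame Ctil share the orientation of
   Chat, the coordinates of a point in F differ from those in Ctil by the
   translation t = [0 0 ztil]^T + ^F t_Chat.  For each normal a_i (of norm at
   most 1), the first part contributes ztil * a_{i,z} >= delta and, by
   Cauchy-Schwarz, the second part at least -delta, so no half-space constraint
   of the field of view of Ctil can be violated in F. *)

Section Vectors.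
Context {R : realType}.
Implicit Types (u v w : 'cV[R]_3) (a b c : R).

Lemma dotvE u v : dotv u v = u i0 0 * v i0 0 + u i1 0 * v i1 0 + u i2 0 * v i2 0.
Proof.
rewrite /dotv !big_ord_recl big_ord0 addr0 addrA.
by congr (_ * _ + _ * _ + _ * _); congr (_ _ 0); apply/val_inj.
Qed.

Lemma dotvDl u v w : dotv (u + v) w = dotv u w + dotv v w.
Proof. by rewrite !dotvE !mxE; ring. Qed.

Lemma dotv_vec3 a b c v : dotv (vec3 a b c) v = a * xc v + b * yc v + c * zc v.
Proof. by rewrite dotvE !mxE. Qed.

Lemma dotv_ge0 v : 0 <= dotv v v.
Proof. by rewrite dotvE -!expr2 !addr_ge0 ?sqr_ge0. Qed.

Lemma lagrange_identity u v :
  dotv u u * dotv v v = dotv u v ^+ 2 + dotv (crossv u v) (crossv u v).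
Proof. by rewrite !dotvE !mxE /= /xc /yc /zc; ring. Qed.

Lemma cauchy_schwarz u v : `|dotv u v| <= normv u * normv v.
Proof.
rewrite /normv -sqrtrM ?dotv_ge0 // -sqrtr_sqr ler_sqrt; last first.
  by rewrite mulr_ge0 ?dotv_ge0.
by rewrite lagrange_identity lerDl dotv_ge0.
Qed.

Lemma normvZ a v : normv (a *: v) = `|a| * normv v.
Proof.
rewrite /normv; have -> : dotv (a *: v) (a *: v) = a ^+ 2 * dotv v v.
  by rewrite !dotvE !mxE; ring.
by rewrite sqrtrM ?sqr_ge0 // sqrtr_sqr.
Qed.

Lemma normvN v : normv (- v) = normv v.
Proof. by rewrite -scaleN1r normvZ normrN1 mul1r. Qed.

Lemma normv_normalize_le1 v : normv ((normv v)^-1 *: v) <= 1.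
Proof.
rewrite normvZ ger0_norm ?invr_ge0 ?sqrtr_ge0 //.
have [->|nz] := eqVneq (normv v) 0; first by rewrite mulr0.
by rewrite mulVf.
Qed.

End Vectors.

Section Frames.
Context {R : realType}.
Implicit Types F G H : frame R.

Lemma rot_relR_eq1 {F G} : relR F G = 1%:M -> Defs.rot G = Defs.rot F.
Proof.
rewrite /relR => FG1; have RFRFt := mulmx1C (rot_orth F).
by rewrite -(mul1mx (Defs.rot G)) -RFRFt -mulmxA FG1 mulmx1.
Qed.

Lemma coord_add {F G} y :
  Defs.rot F = Defs.rot G -> Defs.coord F y = Defs.coord G y + relt F G.
Proof.
move=> eFG; rewrite /Defs.coord /relt eFG -mulmxDr.
by congr (_ *m _); rewrite addrA subrK.
Qed.

Lemma relt_add {F G} H : Defs.rot F = Defs.rot G -> relt F H = relt F G + relt G H.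
Proof.
move=> eFG; rewrite /relt eFG -mulmxDr.
by congr (_ *m _); rewrite [RHS]addrC addrA subrK.
Qed.

Lemma inP0_relR {delta : R} {Chat F} :
  inP delta 0 Chat F -> relR F Chat = 1%:M.
Proof.
case=> _ [w [w0 ->]].
have /eqP w_eq0 : normv w == 0 by rewrite eq_le w0 sqrtr_ge0.
by rewrite /rodrigues w_eq0 eqxx.
Qed.

End Frames.

Section Camera.
Context {R : realType} (K : 'M[R]_3) (C : 'M[R]_(2, 4)).

Lemma normv_avec_le1 i : normv (avec K C i) <= 1.
Proof. by rewrite /avec normvN normv_normalize_le1. Qed.

Lemma amin_le_avec i : amin K C <= zc (avec K C i).
Proof.
have := ltn_ord i; rewrite -[i in avec _ _ i]inord_val /amin.
move: (avec K C) (nat_of_ord i) => a [|[|[|[|//]]]] _.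
all: by rewrite !ge_min lexx ?orbT.
Qed.

End Camera.

Theorem theorem1 (R : realType) (Chat Ctil : frame R) (K : 'M[R]_3)
  (C : 'M[R]_(2, 4)) (delta ztil : R) :
  intrinsic K ->
  0 <= delta ->
  0 < amin K C ->
  relR Chat Ctil = 1%:M ->
  relt Chat Ctil = vec3 0 0 ztil ->
  delta / amin K C <= ztil ->
  forall F : frame R, inP delta 0 Chat F ->
  forall y : 'cV[R]_3, fov Ctil K C y -> fov F K C y.
Proof.
move=> _ delta_ge0 amin_gt0 RCtil tCtil ztil_ge F inPF y fovCtil i.
have rotF : Defs.rot Chat = Defs.rot F := rot_relR_eq1 (inP0_relR inPF).
have rotCtil : Defs.rot Ctil = Defs.rot Chat := rot_relR_eq1 RCtil.
rewrite (coord_add y (_ : Defs.rot F = Defs.rot Ctil)) ?rotCtil //.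
rewrite (relt_add Ctil (esym rotF)) tCtil !dotvDl dotv_vec3 !mul0r !add0r.
set a := avec K C i; set t := relt F Chat.
have lift_ge : delta <= ztil * zc a.
  have ztil0 : 0 <= ztil := le_trans (divr_ge0 delta_ge0 (ltW amin_gt0)) ztil_ge.
  rewrite ler_pdivrMr // in ztil_ge.
  by rewrite (le_trans ztil_ge) // ler_wpM2l // amin_le_avec.
have shift_ge : - delta <= dotv t a.
  move: (cauchy_schwarz t a); rewrite ler_norml => /andP[+ _].
  apply: le_trans; rewrite lerN2 -[delta]mulr1.
  by rewrite ler_pM ?sqrtr_ge0 ?normv_avec_le1 //; case: inPF.
by rewrite addr_ge0 ?fovCtil // -(subrr delta) addrC lerD.
Qed.
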